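(* Let $\succeq$ be a preference order on $\mathcal L^\infty(\Omega,\mathcal F)$ satisfying (SM) and (PC). Then for all $f,g\in\mathcal L^\infty(\Omega,\mathcal F)$ with $f(\omega)\ge g(\omega)$ for all $\omega\in\Omega$ we have $f\succeq g$.
   Context: $\mathcal L^\infty(\Omega,\mathcal F)$: bounded $\mathcal F$-measurable real functions. Preference order: complete transitive relation; $\succ,\sim$ as usual. Null events $\mathcal N_\succeq=\{A\in\mathcal F: f1_A+g1_{A^c}\sim g\ \forall f,g\}$. (SM): for $A\notin\mathcal N_\succeq$, every $f$ and constants $x>y$: $x1_A+f1_{A^c}\succ y1_A+f1_{A^c}$. (PC): for uniformly bounded $f_n\to f$ pointwise and $g\succ f$ (resp. $f\succ g$) there is $N$ with $g\succ f_n$ (resp. $f_n\succ g$) for $n>N$. *)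

From HB Require Import structures.
From mathcomp Require Import all_boot all_order all_algebra.
From mathcomp Require Import all_classical all_reals all_analysis.
Set Implicit Arguments. Unset Strict Implicit. Unset Printing Implicit Defensive.
Import Order.TTheory GRing.Theory Num.Theory numFieldTopology.Exports numFieldNormedType.Exports.
Local Open Scope classical_set_scope.
Local Open Scope ring_scope.

Section Prefs.
Context {d : measure_display} {T : measurableType d} {R : realType}.

Definition Linf (f : T -> R) : Prop :=
  measurable_fun setT f /\ exists M : R, forall w, `|f w| <= M.

Definition spref (pref : (T -> R) -> (T -> R) -> Prop) f g :=
  pref f g /\ ~ pref g f.
Definition indiff (pref : (T -> R) -> (T -> R) -> Prop) f g :=
  pref f g /\ pref g f.

Definition preference_order (pref : (T -> R) -> (T -> R) -> Prop) : Prop :=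
  (forall f g, Linf f -> Linf g -> pref f g \/ pref g f) /\
  (forall f g h, Linf f -> Linf g -> Linf h -> pref f g -> pref g h -> pref f h).

Definition splice (A : set T) (f g : T -> R) : T -> R :=
  fun w => f w * \1_A w + g w * \1_(~` A) w.

Definition null_event (pref : (T -> R) -> (T -> R) -> Prop) (A : set T) : Prop :=
  measurable A /\
  forall f g, Linf f -> Linf g -> indiff pref (splice A f g) g.

Definition SM (pref : (T -> R) -> (T -> R) -> Prop) : Prop :=
  forall (A : set T), measurable A -> ~ null_event pref A ->
  forall f, Linf f -> forall x y : R, y < x ->
    spref pref (splice A (cst x) f) (splice A (cst y) f).

Definition PC (pref : (T -> R) -> (T -> R) -> Prop) : Prop :=
  forall (fn : nat -> T -> R) (f g : T -> R),
    (forall n, Linf (fn n)) -> Linf f -> Linf g ->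
    (exists M : R, forall n w, `|fn n w| <= M) ->
    (forall w, (fun n => fn n w) @ \oo --> f w) ->
    (spref pref g f -> exists N, forall n, (N < n)%N -> spref pref g (fn n)) /\
    (spref pref f g -> exists N, forall n, (N < n)%N -> spref pref (fn n) g).

End Prefs.

From HB Require Import structures.
From mathcomp Require Import all_boot all_order all_algebra.
From mathcomp Require Import all_classical all_reals all_analysis.
From mathcomp Require Import ring lra measurable_realfun.
Import Order.TTheory GRing.Theory Num.Theory numFieldTopology.Exports numFieldNormedType.Exports.
Local Open Scope classical_set_scope.
Local Open Scope ring_scope.

(* If two acts h >= k take values in a common grid c + e*N, then k can be raised to h one
   level at a time: max(k, min(h, t)) moves from level t to the next level only on the event
   where k lies below and h above that level, and there it is a constant raised by e.  By (SM),
   or because that event is null, every step is weakly preferred, and transitivity gives h >= k.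
   For general f >= g, assume g > f.  (PC) gives g > F for a grid approximation F >= f from
   above, and then G > F for an approximation G <= g from below on a finer grid that still
   contains the values of F; this contradicts the grid case. *)

Section Grid.
Context {R : archiRealFieldType}.
Implicit Types (c e x a : R).

Definition grid_floor c e x : R := c + (Num.truncn ((x - c) / e))%:R * e.

Definition on_grid c e x := exists j : nat, x = c + j%:R * e.

Lemma on_grid_floor c e x : on_grid c e (grid_floor c e x).
Proof. by eexists. Qed.

Lemma on_gridD c e x : on_grid c e x -> on_grid c e (x + e).
Proof. by move=> [j ->]; exists j.+1; rewrite -natr1 mulrDl mul1r addrA. Qed.

Lemma on_grid_refine c e x k : on_grid c e x -> on_grid c (e * harmonic k) x.
Proof.
move=> [j ->]; exists (j * k.+1)%N; rewrite natrM /=.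
by field; rewrite addrC natr1 pnatr_eq0.
Qed.

Lemma on_grid_gap c e x (m : nat) : 0 < e -> on_grid c e x ->
  x <= c + m%:R * e \/ c + m.+1%:R * e <= x.
Proof.
move=> e0 [j ->]; rewrite !lerD2l !ler_pM2r // !ler_nat.
by case: (leqP j m) => jm; [left | right].
Qed.

Lemma grid_floor_bounds c e x : 0 < e -> c <= x ->
  [/\ c <= grid_floor c e x, grid_floor c e x <= x & x < grid_floor c e x + e].
Proof.
move=> e0 cx; rewrite /grid_floor.
have xc : 0 <= x - c by rewrite subr_ge0.
have /andP[lo hi] := truncn_itv (divr_ge0 xc (ltW e0)).
rewrite -natr1 in hi; set t := (Num.truncn _)%:R in lo hi *.
rewrite ler_pdivlMr // in lo; rewrite ltr_pdivrMr // mulrDl mul1r in hi.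
have : 0 <= t * e by rewrite mulr_ge0 ?ler0n ?(ltW e0).
split; lra.
Qed.

Lemma grid_floor_mono c e : 0 < e -> {homo grid_floor c e : x y / x <= y}.
Proof.
move=> e0 x y xy; rewrite lerD2l ler_pM2r // ler_nat le_truncn //.
by rewrite ler_pM2r ?invr_gt0 // lerD2r.
Qed.

Lemma grid_floor_norm_le c e x : 0 < e -> c <= x ->
  `|grid_floor c e x| <= `|c| + `|x|.
Proof.
move=> e0 cx; have [lo hi _] := grid_floor_bounds c e x e0 cx.
have := ler_norm x; have := ler_norm (- c); rewrite normrN => ? ?.
have := normr_ge0 x; have := normr_ge0 c => ? ?.
by rewrite ler_norml; apply/andP; split; lra.
Qed.

Lemma cvg_grid_floor c a x (s : nat -> R) : 0 < a -> c <= x ->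
  (forall n, 0 <= s n <= a * harmonic n) ->
  grid_floor c (a * harmonic n) x + s n @[n --> \oo] --> x.
Proof.
move=> a0 cx s_bd.
have ah0 : a * harmonic n @[n --> \oo] --> 0.
  by rewrite -(mulr0 a); apply: cvgM; [exact: cvg_cst | exact: cvg_harmonic].
apply: (@squeeze_cvgr _ _ _ _ (fun n => x - a * harmonic n) (fun n => x + a * harmonic n)).
- near=> n; have /andP[s0 sa] := s_bd n.
  have [_ hi lo] := grid_floor_bounds c _ x (mulr_gt0 a0 (harmonic_gt0 n)) cx.
  by apply/andP; split; lra.
- by rewrite -[x in _ --> x]subr0; apply: cvgB => //; exact: cvg_cst.
- by rewrite -[x in _ --> x]addr0; apply: cvgD => //; exact: cvg_cst.
Unshelve. all: by end_near.
Qed.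

Lemma exists_grid_ge c e b : 0 < e -> exists m : nat, b <= c + m%:R * e.
Proof.
move=> e0; exists (Num.truncn ((b - c) / e)).+1.
have := truncnS_gt ((b - c) / e); rewrite ltr_pdivrMr // => ?; lra.
Qed.

End Grid.

Section Acts.
Context {d : measure_display} {T : measurableType d} {R : realType}.
Implicit Types (f g h k u : T -> R) (A : set T).

Lemma Linf_cst (x : R) : Linf (cst x : T -> R).
Proof. by split; [exact: measurable_cst | exists `|x|]. Qed.

Lemma Linf_lbound f : Linf f -> exists c, forall w, c <= f w.
Proof. by move=> [_ [M fM]]; exists (- M) => w; have := fM w; rewrite ler_norml => /andP[]. Qed.

Lemma splice_in A f g w : A w -> splice A f g w = f w.
Proof.
move=> Aw; rewrite /splice !indicE mem_set // memNset; last by move/(_ Aw).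
by rewrite mulr1 mulr0 addr0.
Qed.

Lemma splice_out A f g w : ~ A w -> splice A f g w = g w.
Proof. by move=> Aw; rewrite /splice !indicE memNset // mem_set // mulr1 mulr0 add0r. Qed.

Lemma measurable_jump h k (s : R) : Linf h -> Linf k ->
  measurable [set w | k w < s <= h w].
Proof.
move=> [mh _] [mk _].
have mb : measurable_fun setT (fun w => (k w < s) && (s <= h w)).
  by apply: measurable_and; [apply: measurable_fun_ltr | apply: measurable_fun_ler].
by have := mb measurableT [set true] I; rewrite setTI.
Qed.

Definition raise_toward h k (t : R) : T -> R := fun w => Num.max (k w) (Num.min (h w) t).

Lemma Linf_raise_toward h k t : Linf h -> Linf k -> Linf (raise_toward h k t).
Proof.
move=> [mh [Mh hM]] [mk [Mk kM]]; split.
  by apply: measurable_maxr => //; apply: measurable_minr.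
exists (Mk + Mh) => w; rewrite /raise_toward ler_norml le_max ge_max.
have := hM w; have := kM w; have := normr_ge0 (h w); have := normr_ge0 (k w).
rewrite !ler_norml => ? ? /andP[? ?] /andP[? ?].
have ? : Num.min (h w) t <= h w by rewrite ge_min lexx.
by apply/and3P; split; [apply/orP; left | |]; lra.
Qed.

Lemma raise_toward_low h k t : (forall w, t <= k w) -> raise_toward h k t = k.
Proof. by move=> tk; apply/funext => w; rewrite /raise_toward max_l // ge_min (tk w) orbT. Qed.

Lemma raise_toward_high h k t : (forall w, k w <= h w) -> (forall w, h w <= t) ->
  raise_toward h k t = h.
Proof. by move=> kh ht; apply/funext => w; rewrite /raise_toward min_l // max_r. Qed.

Section RaiseStep.
Context {h k : T -> R} {t s : R}.
Hypothesis ts : t < s.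
Hypotheses (h_gap : forall w, h w <= t \/ s <= h w) (k_gap : forall w, k w <= t \/ s <= k w).

Lemma raise_toward_jump w : k w < s <= h w -> raise_toward h k t w = t.
Proof.
move=> /andP[ks sh]; have kt : k w <= t by case: (k_gap w) => // ?; lra.
have th : t <= h w := ltW (lt_le_trans ts sh).
by rewrite /raise_toward min_r // max_r.
Qed.

Lemma raise_toward_step :
  raise_toward h k s = splice [set w | k w < s <= h w] (cst s) (raise_toward h k t).
Proof.
apply/funext => w; case: (pselect (k w < s <= h w)) => [jump | no_jump].
  have /andP[ks sh] := jump.
  by rewrite splice_in //= /raise_toward min_r // max_r // ltW.
rewrite splice_out // /raise_toward; case: (ltP (k w) s) => [ks | sk].
  have ht : h w <= t by case: (h_gap w) => // sh; case: no_jump; rewrite ks sh.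
  by rewrite !min_l //; lra.
by rewrite !max_l // ge_min ?(ltW (lt_le_trans ts sk)) ?sk orbT.
Qed.

End RaiseStep.
End Acts.

Section Preference.
Context {d : measure_display} {T : measurableType d} {R : realType}.
Context {pref : (T -> R) -> (T -> R) -> Prop}.
Implicit Types (f g h k u : T -> R) (A : set T).

Lemma pref_refl f : preference_order pref -> Linf f -> pref f f.
Proof. by move=> [complete _] Lf; case: (complete f f Lf Lf). Qed.

Lemma pref_splice_cst_gt A u (x y : R) : SM pref -> measurable A -> Linf u ->
  (forall w, A w -> u w = y) -> y < x -> pref (splice A (cst x) u) u.
Proof.
move=> sm mA Lu uA yx.
case: (pselect (null_event pref A)) => [[_ null] | not_null].
  by case: (null (cst x) u (Linf_cst x) Lu).
have u_splice : splice A (cst y) u = u.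
  by apply/funext => w; case: (pselect (A w)) => Aw;
    [rewrite splice_in // uA | rewrite splice_out].
by have [] := sm A mA not_null u Lu x y yx; rewrite u_splice.
Qed.

Lemma pref_on_grid c e h k : preference_order pref -> SM pref -> 0 < e ->
  Linf h -> Linf k -> (forall w, k w <= h w) -> (forall w, c <= k w) ->
  (forall w, on_grid c e (h w)) -> (forall w, on_grid c e (k w)) -> pref h k.
Proof.
move=> order sm e0 Lh Lk kh ck h_grid k_grid.
pose level m := c + m%:R * e.
have pref_raise m : pref (raise_toward h k (level m)) k.
  have Lraise t : Linf (raise_toward h k t) := Linf_raise_toward _ _ t Lh Lk.
  elim: m => [|m IH].
    by rewrite raise_toward_low /level ?mul0r ?addr0 //; exact: pref_refl.
  have lvl_lt : level m < level m.+1 by rewrite ltrD2l ltr_pM2r // ltr_nat.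
  have gap f : (forall w, on_grid c e (f w)) -> forall w, f w <= level m \/ level m.+1 <= f w.
    by move=> f_grid w; exact: on_grid_gap.
  have step : pref (raise_toward h k (level m.+1)) (raise_toward h k (level m)).
    rewrite {1}(raise_toward_step lvl_lt (gap _ h_grid)).
    apply: pref_splice_cst_gt => //.
    - exact: measurable_jump.
    - exact: raise_toward_jump lvl_lt (gap _ k_grid).
    - exact: lvl_lt.
  exact: order.2 _ _ _ (Lraise _) (Lraise _) Lk step IH.
have [_ [Mh hM]] := Lh.
have [M levelM] := exists_grid_ge c e Mh e0.
have h_le_level w : h w <= level M by apply: le_trans (ler_norm _) (le_trans (hM w) levelM).
by have := pref_raise M; rewrite raise_toward_high.
Qed.

Section GridApprox.
Variables (c a : R) (s : nat -> R) (f : T -> R).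
Hypotheses (a_gt0 : 0 < a) (Lf : Linf f) (c_le_f : forall w, c <= f w).

Definition grid_approx n : T -> R := fun w => grid_floor c (a * harmonic n) (f w) + s n.

Lemma Linf_grid_approx n : Linf (grid_approx n).
Proof.
have step_gt0 : 0 < a * harmonic n := mulr_gt0 a_gt0 (harmonic_gt0 n).
have [mf [M fM]] := Lf; split.
  apply: measurable_funD => //; apply: measurableT_comp mf.
  by apply: nondecreasing_measurable => //; exact: grid_floor_mono.
exists (`|c| + M + `|s n|) => w; rewrite /grid_approx.
apply: le_trans; first exact: ler_normD.
rewrite lerD2r.
by apply: le_trans (grid_floor_norm_le c _ _ step_gt0 (c_le_f w)) _; rewrite lerD2l.
Qed.

Hypothesis s_bounds : forall n, 0 <= s n <= a * harmonic n.

Lemma grid_approx_ubounded : exists M, forall n w, `|grid_approx n w| <= M.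
Proof.
have [_ [M fM]] := Lf; exists (`|c| + M + a) => n w; rewrite /grid_approx.
have step_gt0 : 0 < a * harmonic n := mulr_gt0 a_gt0 (harmonic_gt0 n).
have /andP[s0 sa] := s_bounds n.
have step_le_a : a * harmonic n <= a.
  by rewrite ler_piMr ?(ltW a_gt0) //= invf_le1 // ?ler1n ?ltr0n.
apply: le_trans; first exact: ler_normD.
apply: lerD; last by rewrite ger0_norm //; lra.
by apply: le_trans (grid_floor_norm_le c _ _ step_gt0 (c_le_f w)) _; rewrite lerD2l.
Qed.

Lemma PC_grid_approx g : PC pref -> Linf g ->
  (spref pref g f -> exists n, spref pref g (grid_approx n)) /\
  (spref pref f g -> exists n, spref pref (grid_approx n) g).
Proof.
move=> pc Lg.
have cvg_approx w : grid_approx ^~ w @ \oo --> f w by apply: cvg_grid_floor.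
have [above below] := pc _ _ _ Linf_grid_approx Lf Lg grid_approx_ubounded cvg_approx.
by split => [/above | /below] [N approx]; exists N.+1; exact: approx.
Qed.

End GridApprox.

Lemma spref_grid_above c f g : PC pref -> Linf f -> Linf g -> (forall w, c <= f w) ->
  spref pref g f -> exists2 e, 0 < e & exists F,
    [/\ Linf F, spref pref g F, forall w, f w <= F w & forall w, on_grid c e (F w)].
Proof.
move=> pc Lf Lg cf gf.
pose s n : R := 1 * harmonic n.
have s_bounds n : 0 <= s n <= 1 * harmonic n by rewrite /s mul1r harmonic_ge0 lexx.
have [n gF] := (PC_grid_approx c 1 s f ltr01 Lf cf s_bounds g pc Lg).1 gf.
have e_gt0 : 0 < s n by rewrite /s mul1r harmonic_gt0.
exists (s n) => //; exists (grid_approx c 1 s f n); split => // [|w|w].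
- exact: Linf_grid_approx.
- by have [_ _ /ltW] := grid_floor_bounds c (s n) (f w) e_gt0 (cf w).
- exact/on_gridD/on_grid_floor.
Qed.

Lemma spref_grid_below c e g F : PC pref -> 0 < e -> Linf g -> Linf F ->
  (forall w, c <= g w) -> spref pref g F -> exists m, exists G,
    [/\ Linf G, spref pref G F, forall w, c <= G w <= g w
      & forall w, on_grid c (e * harmonic m) (G w)].
Proof.
move=> pc e_gt0 Lg LF cg gF.
have zero_bounds m : (0 : R) <= 0 <= e * harmonic m.
  by rewrite lexx mulr_ge0 ?harmonic_ge0 ?ltW.
have [m GF] := (PC_grid_approx c e (fun=> 0) g e_gt0 Lg cg zero_bounds F pc LF).2 gF.
exists m, (grid_approx c e (fun=> 0) g m); split => // [|w|w].
- exact: Linf_grid_approx.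
- have [? ? _] := grid_floor_bounds c _ (g w) (mulr_gt0 e_gt0 (harmonic_gt0 m)) (cg w).
  by rewrite /grid_approx addr0; apply/andP.
- by rewrite /grid_approx addr0; exact: on_grid_floor.
Qed.

End Preference.

Theorem mainTheorem12 (d : measure_display) (T : measurableType d) (R : realType)
  (pref : (T -> R) -> (T -> R) -> Prop) :
  preference_order pref -> SM pref -> PC pref ->
  forall f g : T -> R, Linf f -> Linf g ->
    (forall w, g w <= f w) -> pref f g.
Proof.
move=> order sm pc f g Lf Lg gf.
case: (order.1 f g Lf Lg) => // pgf; apply: contrapT => npfg.
have [c cg] := Linf_lbound g Lg.
have cf w : c <= f w := le_trans (cg w) (gf w).
have [e e_gt0 [F [LF gF fF F_grid]]] := spref_grid_above c f g pc Lf Lg cf (conj pgf npfg).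
have [m [G [LG GF G_bounds G_grid]]] := spref_grid_below c e g F pc e_gt0 Lg LF cg gF.
apply: GF.2; apply: (pref_on_grid c (e * harmonic m) F G order sm) => //.
- exact: mulr_gt0 e_gt0 (harmonic_gt0 m).
- by move=> w; have /andP[_ Gg] := G_bounds w; apply: le_trans Gg (le_trans (gf w) (fF w)).
- by move=> w; case/andP: (G_bounds w).
- by move=> w; exact: on_grid_refine.
Qed.
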